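(* Let $G$ be a finitely generated group and let $S$ and $S'$ be finite generating sets of $G$, each closed under inverses. Then there is a constant $K$ such that $\Delta_S(n)\le K\,\Delta_{S'}(Kn)+K$ for all $n\ge1$.
   Context: For a finite generating set $T$ of $G$ closed under inverses, $\Gamma_T$ is the Cayley diagram (edge labelled $t$ from $g$ to $gt$), with word metric $d_T(g,g')$ = length of a shortest word in $T$ representing $g^{-1}g'$. A cycle of length $n\ge1$ in $\Gamma_T$ is a sequence $g_0,\dots,g_n$ in $G$ with an edge from each $g_{i-1}$ to $g_i$ and $g_n=g_0$. A (diagonal) triangulation of a circle: distinguish one or more points on the circle and join some of them by chords such that no two chords meet in the interior, the interior is divided into triangles, and each arc between neighbouring distinguished points is a side of a triangle; circles with at most three distinguished points count as triangulated with no chords. A triangulation of the cycle $g_0,\dots,g_n$ is such a triangulation of a circle with distinguished points $p_1,\dots,p_n$ labelled $g_1,\dots,g_n$ counterclockwise; a chord from $p_i$ to $p_j$ has length $d_T(g_i,g_j)$; a $k$-triangulation has all chord lengths $\le k$. $\Delta_T(n)$ is the least $k$ such that every cycle of length at most $n$ in $\Gamma_T$ has a $k$-triangulation. *)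

From Stdlib Require Import Arith List Lia ClassicalEpsilon.
Import ListNotations.

Record group := Group {
  carrier :> Type;
  gmul : carrier -> carrier -> carrier;
  gone : carrier;
  ginv : carrier -> carrier;
  gmulA : forall x y z, gmul x (gmul y z) = gmul (gmul x y) z;
  gmul1l : forall x, gmul gone x = x;
  gmulVl : forall x, gmul (ginv x) x = gone
}.

Section Cayley.
Variable G : group.

Fixpoint wprod (w : list G) : G :=
  match w with [] => gone G | t :: w' => gmul G t (wprod w') end.

Definition word_in (T : list G) (w : list G) : Prop := Forall (fun t => In t T) w.

Definition generates (T : list G) : Prop :=
  forall g : G, exists w, word_in T w /\ wprod w = g.

Definition inv_closed (T : list G) : Prop :=
  forall t, In t T -> In (ginv G t) T.

Definition is_word_dist (T : list G) (g h : G) (d : nat) : Prop :=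
  (exists w, word_in T w /\ wprod w = gmul G (ginv G g) h /\ length w = d) /\
  (forall w, word_in T w -> wprod w = gmul G (ginv G g) h -> d <= length w).

Definition word_dist (T : list G) (g h : G) : nat :=
  epsilon (inhabits 0) (is_word_dist T g h).

Definition is_cycle (T : list G) (n : nat) (g : nat -> G) : Prop :=
  1 <= n /\ g n = g 0 /\
  forall i, 1 <= i <= n -> exists t, In t T /\ g i = gmul G (g (i - 1)) t.

End Cayley.

(** Chord (a,c) between the distinguished points p_a and p_c, present only
    if they are not neighbours along the boundary of the sub-polygon. *)
Definition sub_chord (a c : nat) : list (nat * nat) :=
  if S a <? c then [(a, c)] else [].

(** [poly_tri a b C]: C is the set of chords of a triangulation of the polygon
    with consecutive vertices p_a, ..., p_b (a < b), whose side p_a p_b is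
    given (not counted in C): the side p_a p_b lies in a unique triangle
    p_a p_c p_b, and the two remaining sub-polygons are triangulated. *)
Inductive poly_tri : nat -> nat -> list (nat * nat) -> Prop :=
| poly_tri_edge a : poly_tri a (S a) []
| poly_tri_split a c b C1 C2 :
    a < c -> c < b -> poly_tri a c C1 -> poly_tri c b C2 ->
    poly_tri a b (C1 ++ C2 ++ sub_chord a c ++ sub_chord c b).

(** Diagonal triangulation of a circle with distinguished points p_1..p_n
    (counterclockwise), given by its set of chords C (pairs of indices). *)
Definition circle_tri (n : nat) (C : list (nat * nat)) : Prop :=
  (1 <= n <= 3 /\ C = []) \/ (4 <= n /\ poly_tri 1 n C).

Definition k_triangulation (G : group) (T : list G) (n : nat) (g : nat -> G) (k : nat) : Prop :=
  exists C, circle_tri n C /\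
    Forall (fun ij => word_dist G T (g (fst ij)) (g (snd ij)) <= k) C.

Definition tri_bound (G : group) (T : list G) (n k : nat) : Prop :=
  forall m g, m <= n -> is_cycle G T m g -> k_triangulation G T m g k.

Definition is_Delta (G : group) (T : list G) (n d : nat) : Prop :=
  tri_bound G T n d /\ forall k, tri_bound G T n k -> d <= k.

Definition Delta (G : group) (T : list G) (n : nat) : nat :=
  epsilon (inhabits 0) (is_Delta G T n).

From Stdlib Require Import Arith List.
From Stdlib Require Import Lia Wf_nat ClassicalEpsilon Classical.
Import ListNotations.

(* Replace every edge of an S-cycle by a geodesic S'-word for its label,
   padded with t0 t0^-1 (t0 in S') so that no block is empty.  This gives an
   S'-cycle h of length at most L m whose x-th vertex is within S'-distance L
   of g (rho x), where rho x is the index of the block containing position x.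
   The map rho is nondecreasing with unit steps, so a Delta_S'-triangulation
   of h pushes forward along rho to a triangulation of g: chords inside one
   block collapse, and every surviving chord has S'-length at most
   Delta_S' + 1 + 2 L, hence S-length at most a constant times that. *)

Section GroupLaws.
Variable G : group.
Implicit Types x y : G.

Lemma ginv_mulK x y : gmul G (ginv G x) (gmul G x y) = y.
Proof. now rewrite gmulA, gmulVl, gmul1l. Qed.

Lemma gmulVr x : gmul G x (ginv G x) = gone G.
Proof.
  assert (Hidem : gmul G (gmul G x (ginv G x)) (gmul G x (ginv G x)) = gmul G x (ginv G x))
    by now rewrite <- gmulA, (gmulA G (ginv G x)), gmulVl, gmul1l.
  rewrite <- (ginv_mulK (gmul G x (ginv G x)) (gmul G x (ginv G x))), Hidem.
  apply gmulVl.
Qed.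

Lemma gmul1r x : gmul G x (gone G) = x.
Proof. now rewrite <- (gmulVl G x), gmulA, gmulVr, gmul1l. Qed.

Lemma gmul_invK x y : gmul G x (gmul G (ginv G x) y) = y.
Proof. now rewrite gmulA, gmulVr, gmul1l. Qed.

Lemma ginv_unique x y : gmul G x y = gone G -> ginv G x = y.
Proof. intro Hxy. now rewrite <- (ginv_mulK x y), Hxy, gmul1r. Qed.

Lemma ginv1 : ginv G (gone G) = gone G.
Proof. apply ginv_unique, gmul1l. Qed.

Lemma ginvM x y : ginv G (gmul G x y) = gmul G (ginv G y) (ginv G x).
Proof. apply ginv_unique. now rewrite <- gmulA, gmul_invK, gmulVr. Qed.

End GroupLaws.

Section Words.
Variables (G : group) (T : list G).

Lemma wprod_app (u v : list G) : wprod G (u ++ v) = gmul G (wprod G u) (wprod G v).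
Proof.
  induction u as [|t u IH]; simpl.
  - now rewrite gmul1l.
  - now rewrite IH, gmulA.
Qed.

Lemma word_in_app (u v : list G) : word_in G T u -> word_in G T v -> word_in G T (u ++ v).
Proof. intros Hu Hv. now apply Forall_app. Qed.

Lemma word_in_skipn (k : nat) (w : list G) : word_in G T w -> word_in G T (skipn k w).
Proof.
  intro Hw. rewrite <- (firstn_skipn k w) in Hw. now apply Forall_app in Hw as [_ Hw].
Qed.

Lemma wprod_rev_inv (w : list G) : wprod G (rev (map (ginv G) w)) = ginv G (wprod G w).
Proof.
  induction w as [|t w IH]; simpl.
  - now rewrite ginv1.
  - now rewrite wprod_app, IH, ginvM; simpl; rewrite gmul1r.
Qed.

Lemma word_in_rev_inv (w : list G) :
  inv_closed G T -> word_in G T w -> word_in G T (rev (map (ginv G) w)).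
Proof.
  intros HT Hw. induction Hw as [|t w Ht _ IH]; simpl; [constructor|].
  apply word_in_app; [exact IH|]. constructor; [apply HT, Ht|constructor].
Qed.

End Words.

Lemma nat_min_exists (P : nat -> Prop) :
  (exists n, P n) -> exists n, P n /\ forall k, P k -> n <= k.
Proof.
  intro Hex.
  destruct (dec_inh_nat_subset_has_unique_least_element P (fun n => classic (P n)) Hex)
    as [n [Hn _]].
  now exists n.
Qed.

Section WordMetric.
Variables (G : group) (T : list G).
Hypothesis HT : generates G T.

Lemma word_dist_spec (a b : G) : is_word_dist G T a b (word_dist G T a b).
Proof.
  unfold word_dist. apply epsilon_spec.
  destruct (HT (gmul G (ginv G a) b)) as [w0 [Hw0 Hp0]].
  destruct (nat_min_exists (fun d => exists w, word_in G T w /\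
              wprod G w = gmul G (ginv G a) b /\ length w = d)) as [d [Hd Hmin]].
  { now exists (length w0), w0. }
  exists d. split; [exact Hd|]. intros w Hw Hp. apply Hmin. now exists w.
Qed.

Lemma word_dist_le (a b : G) (w : list G) :
  word_in G T w -> gmul G a (wprod G w) = b -> word_dist G T a b <= length w.
Proof.
  intros Hw Hp. apply (proj2 (word_dist_spec a b) w Hw). now rewrite <- Hp, ginv_mulK.
Qed.

Lemma word_dist_geodesic (a b : G) :
  exists w, word_in G T w /\ gmul G a (wprod G w) = b /\ length w = word_dist G T a b.
Proof.
  destruct (proj1 (word_dist_spec a b)) as [w [Hw [Hp Hl]]].
  exists w. now rewrite Hp, gmul_invK.
Qed.

Lemma word_dist_refl (a : G) : word_dist G T a a = 0.
Proof. apply Nat.le_0_r, (word_dist_le a a []); [constructor|apply gmul1r]. Qed.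

Lemma word_dist_edge (a t : G) : In t T -> word_dist G T a (gmul G a t) <= 1.
Proof.
  intro Ht. apply (word_dist_le _ _ [t]); [now repeat constructor|]. simpl. now rewrite gmul1r.
Qed.

Lemma word_dist_triangle (a b c : G) :
  word_dist G T a c <= word_dist G T a b + word_dist G T b c.
Proof.
  destruct (word_dist_geodesic a b) as [u [Hu [Hpu Hlu]]].
  destruct (word_dist_geodesic b c) as [v [Hv [Hpv Hlv]]].
  rewrite <- Hlu, <- Hlv, <- length_app. apply word_dist_le.
  - now apply word_in_app.
  - now rewrite wprod_app, gmulA, Hpu.
Qed.

Lemma word_dist_sym (HTi : inv_closed G T) (a b : G) : word_dist G T a b = word_dist G T b a.
Proof.
  assert (Hle : forall a b, word_dist G T a b <= word_dist G T b a).
  { intros x y. destruct (word_dist_geodesic y x) as [w [Hw [Hp Hl]]].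
    rewrite <- Hl, <- (length_map (ginv G) w), <- length_rev. apply word_dist_le.
    - now apply word_in_rev_inv.
    - now rewrite wprod_rev_inv, <- Hp, <- gmulA, gmulVr, gmul1r. }
  apply Nat.le_antisymm; apply Hle.
Qed.

Lemma cycle_dist (m : nat) (g : nat -> G) (i j : nat) :
  is_cycle G T m g -> i <= j -> j <= m -> word_dist G T (g i) (g j) <= j - i.
Proof.
  intros [_ [_ Hedge]] Hij. induction Hij as [|j Hij IH]; intro Hj.
  - rewrite word_dist_refl. lia.
  - destruct (Hedge (S j)) as [t [Ht Et]]; [lia|].
    replace (S j - 1) with j in Et by lia.
    rewrite Et. pose proof (word_dist_triangle (g i) (g j) (gmul G (g j) t)).
    pose proof (word_dist_edge (g j) t Ht). specialize (IH ltac:(lia)). lia.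
Qed.

End WordMetric.

Lemma generators_word_bound (G : group) (T U : list G) :
  generates G T ->
  exists L, forall u, In u U -> exists w, word_in G T w /\ wprod G w = u /\ length w <= L.
Proof.
  intro HT. induction U as [|u0 U [L HL]].
  - exists 0. intros u [].
  - destruct (HT u0) as [w0 [Hw0 Hp0]].
    exists (Nat.max (length w0) L). intros u [<-|Hu].
    + exists w0. repeat split; auto. lia.
    + destruct (HL u Hu) as [w [Hw [Hp Hl]]]. exists w. repeat split; auto. lia.
Qed.

Lemma word_translate (G : group) (T U : list G) (L : nat) (v : list G) :
  (forall u, In u U -> exists w, word_in G T w /\ wprod G w = u /\ length w <= L) ->
  word_in G U v ->
  exists w, word_in G T w /\ wprod G w = wprod G v /\ length w <= L * length v.
Proof.
  intros HL Hv. induction Hv as [|u v Hu _ [w [Hw [Hp Hl]]]].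
  - exists []. repeat split; [constructor|simpl; lia].
  - destruct (HL u Hu) as [wu [Hwu [Hpu Hlu]]].
    exists (wu ++ w). repeat split.
    + now apply word_in_app.
    + now rewrite wprod_app, Hpu, Hp.
    + rewrite length_app. simpl length. nia.
Qed.

Lemma word_dist_comparison (G : group) (T U : list G) :
  generates G T -> generates G U ->
  exists L, forall a b, word_dist G T a b <= L * word_dist G U a b.
Proof.
  intros HT HU. destruct (generators_word_bound G T U HT) as [L HL].
  exists L. intros a b.
  destruct (word_dist_geodesic G U HU a b) as [v [Hv [Hp Hl]]].
  destruct (word_translate G T U L v HL Hv) as [w [Hw [Hpw Hlw]]].
  rewrite <- Hl. eapply Nat.le_trans; [|exact Hlw].
  apply (word_dist_le G T HT); [exact Hw|]. now rewrite Hpw.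
Qed.

Lemma Forall_sub_chord (P : nat -> nat -> Prop) (a c : nat) :
  P a c -> Forall (fun p => P (fst p) (snd p)) (sub_chord a c).
Proof. intro Hac. unfold sub_chord. destruct (S a <? c); auto. Qed.

Lemma Forall_sub_chord_inv (P : nat -> nat -> Prop) (a c : nat) :
  S a < c -> Forall (fun p => P (fst p) (snd p)) (sub_chord a c) -> P a c.
Proof.
  intros Hac HP. unfold sub_chord in HP. rewrite (proj2 (Nat.ltb_lt _ _) Hac) in HP.
  now inversion HP.
Qed.

Lemma poly_tri_exists (a b : nat) : a < b -> exists C, poly_tri a b C.
Proof.
  induction 1 as [|b Hab [C HC]].
  - exists []. constructor.
  - eexists. apply (poly_tri_split a b (S b) C []); [lia|lia|exact HC|constructor].
Qed.

Lemma poly_tri_chord_range (a b : nat) (C : list (nat * nat)) :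
  poly_tri a b C -> Forall (fun p => a <= fst p /\ fst p < snd p /\ snd p <= b) C.
Proof.
  induction 1 as [a|a c b C1 C2 Hac Hcb _ IH1 _ IH2]; [constructor|].
  rewrite !Forall_app. repeat split.
  - eapply Forall_impl; [|exact IH1]. simpl. lia.
  - eapply Forall_impl; [|exact IH2]. simpl. lia.
  - apply (Forall_sub_chord (fun x y => a <= x /\ x < y /\ y <= b)). lia.
  - apply (Forall_sub_chord (fun x y => a <= x /\ x < y /\ y <= b)). lia.
Qed.

Section UnitStepMap.
Variable rho : nat -> nat.
Hypothesis rho_step : forall x, rho x <= rho (S x) <= S (rho x).

Lemma unit_steps_mono (x y : nat) : x <= y -> rho x <= rho y.
Proof. induction 1 as [|y _ IH]; [lia|]. specialize (rho_step y). lia. Qed.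

Lemma unit_steps_lipschitz (x y : nat) : x <= y -> rho y <= rho x + (y - x).
Proof. induction 1 as [|y Hxy IH]; [lia|]. specialize (rho_step y). lia. Qed.

(* Pushing a triangulation forward: a side or chord whose ends have the same
   image collapses, and so does the triangle built on it. *)
Lemma poly_tri_map (Q : nat -> nat -> Prop) (a b : nat) (C' : list (nat * nat)) :
  poly_tri a b C' ->
  (forall x, a <= x < b -> Q (rho x) (rho (S x))) ->
  Forall (fun p => Q (rho (fst p)) (rho (snd p))) C' ->
  Q (rho a) (rho b) -> rho a < rho b ->
  exists C, poly_tri (rho a) (rho b) C /\ Forall (fun p => Q (fst p) (snd p)) C.
Proof.
  induction 1 as [a|a c b C1 C2 Hac Hcb _ IH1 _ IH2]; intros Hside HC Hab Hlt.
  - exists []. split; [|constructor].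
    replace (rho (S a)) with (S (rho a)) by (specialize (rho_step a); lia). constructor.
  - rewrite !Forall_app in HC. destruct HC as [HC1 [HC2 [HCa HCb]]].
    assert (Qac : Q (rho a) (rho c)).
    { destruct (Nat.eq_dec c (S a)) as [->|Hne]; [apply Hside; lia|].
      apply (Forall_sub_chord_inv (fun x y => Q (rho x) (rho y))); [lia|exact HCa]. }
    assert (Qcb : Q (rho c) (rho b)).
    { destruct (Nat.eq_dec b (S c)) as [->|Hne]; [apply Hside; lia|].
      apply (Forall_sub_chord_inv (fun x y => Q (rho x) (rho y))); [lia|exact HCb]. }
    assert (Side1 : forall x, a <= x < c -> Q (rho x) (rho (S x))) by (intros; apply Hside; lia).
    assert (Side2 : forall x, c <= x < b -> Q (rho x) (rho (S x))) by (intros; apply Hside; lia).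
    pose proof (unit_steps_mono a c ltac:(lia)). pose proof (unit_steps_mono c b ltac:(lia)).
    destruct (Nat.eq_dec (rho a) (rho c)) as [E1|Ne1].
    { rewrite E1. apply IH2; auto. lia. }
    destruct (Nat.eq_dec (rho c) (rho b)) as [E2|Ne2].
    { rewrite <- E2. apply IH1; auto. lia. }
    destruct (IH1 Side1 HC1 Qac ltac:(lia)) as [D1 [HD1 HF1]].
    destruct (IH2 Side2 HC2 Qcb ltac:(lia)) as [D2 [HD2 HF2]].
    exists (D1 ++ D2 ++ sub_chord (rho a) (rho c) ++ sub_chord (rho c) (rho b)). split.
    + apply poly_tri_split; auto; lia.
    + rewrite !Forall_app. repeat split; auto; now apply Forall_sub_chord.
Qed.

End UnitStepMap.

Lemma k_triangulation_mono (G : group) (T : list G) (m : nat) (g : nat -> G) (k k' : nat) :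
  k <= k' -> k_triangulation G T m g k -> k_triangulation G T m g k'.
Proof.
  intros Hk [C [HC HF]]. exists C. split; [exact HC|].
  eapply Forall_impl; [|exact HF]. simpl. lia.
Qed.

Lemma k_triangulation_of_chord_bound (G : group) (T : list G) (m : nat) (g : nat -> G) (k : nat) :
  1 <= m ->
  (forall i j, 1 <= i -> i < j -> j <= m -> word_dist G T (g i) (g j) <= k) ->
  k_triangulation G T m g k.
Proof.
  intros Hm Hk. destruct (le_lt_dec m 3) as [Hm3|Hm4].
  - exists []. split; [left; auto|constructor].
  - destruct (poly_tri_exists 1 m ltac:(lia)) as [C HC].
    exists C. split; [right; auto|].
    eapply Forall_impl; [|exact (poly_tri_chord_range _ _ _ HC)].
    intros p Hp. simpl in Hp. apply Hk; lia.
Qed.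

Section DeltaFunction.
Variables (G : group) (T : list G).
Hypothesis HT : generates G T.

Lemma tri_bound_self (n : nat) : tri_bound G T n n.
Proof.
  intros m g Hmn Hc. apply k_triangulation_of_chord_bound; [apply Hc|].
  intros i j Hi Hij Hj. pose proof (cycle_dist G T HT m g i j Hc ltac:(lia) Hj). lia.
Qed.

Lemma Delta_spec (n : nat) : is_Delta G T n (Delta G T n).
Proof.
  unfold Delta. apply epsilon_spec.
  destruct (nat_min_exists (tri_bound G T n)) as [d [Hd Hmin]].
  - exists n. apply tri_bound_self.
  - now exists d.
Qed.

Lemma Delta_tri_bound (n : nat) : tri_bound G T n (Delta G T n).
Proof. apply Delta_spec. Qed.

Lemma Delta_le (n k : nat) : tri_bound G T n k -> Delta G T n <= k.
Proof. apply Delta_spec. Qed.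

End DeltaFunction.

Lemma generates_nil_trivial (G : group) : generates G [] -> forall x y : G, x = y.
Proof.
  intros H0.
  assert (Hone : forall z : G, z = gone G).
  { intro z. destruct (H0 z) as [[|t w] [Hw Hp]].
    - now rewrite <- Hp.
    - inversion Hw as [|? ? Ht]. destruct Ht. }
  intros x y. now rewrite (Hone x), (Hone y).
Qed.

Lemma Delta_trivial (G : group) (T : list G) (n : nat) :
  generates G T -> generates G [] -> Delta G T n = 0.
Proof.
  intros HT H0. apply Nat.le_0_r, (Delta_le G T HT).
  intros m g _ Hc. apply k_triangulation_of_chord_bound; [apply Hc|].
  intros i j _ _ _. rewrite (generates_nil_trivial G H0 (g j) (g i)). now rewrite word_dist_refl.
Qed.

Section BlockIndex.
Variable sig : nat -> nat.
Hypothesis sig_lt : forall i, sig i < sig (S i).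

Lemma sig_mono (i j : nat) : i <= j -> sig i <= sig j.
Proof. induction 1 as [|j _ IH]; [lia|]. specialize (sig_lt j). lia. Qed.

Lemma sig_lt_mono (i j : nat) : i < j -> sig i < sig j.
Proof. induction 1 as [|j _ IH]; [apply sig_lt|]. specialize (sig_lt j). lia. Qed.

Fixpoint block_index (x : nat) : nat :=
  match x with
  | 0 => 0
  | S x' => if sig (block_index x') <? S x' then S (block_index x') else block_index x'
  end.

Lemma block_index_step (x : nat) : block_index x <= block_index (S x) <= S (block_index x).
Proof. simpl. destruct (_ <? _); lia. Qed.

Hypothesis sig_0 : sig 0 = 0.

(* For x >= 1 the first conjunct reads sig (block_index x - 1) < x. *)
Lemma block_index_spec (x : nat) :
  sig (pred (block_index x)) <= pred x /\ x <= sig (block_index x).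
Proof.
  induction x as [|x [IH1 IH2]]; simpl.
  - rewrite sig_0. lia.
  - specialize (sig_lt (block_index x)).
    destruct (Nat.ltb_spec (sig (block_index x)) (S x)); simpl; lia.
Qed.

Lemma block_index_sig (i : nat) : block_index (sig i) = i.
Proof.
  destruct i as [|i]; [now rewrite sig_0|].
  destruct (block_index_spec (sig (S i))) as [H1 H2].
  destruct (lt_eq_lt_dec (block_index (sig (S i))) (S i)) as [[Hlt|Heq]|Hgt]; auto; exfalso.
  - pose proof (sig_lt_mono _ _ Hlt). lia.
  - pose proof (sig_mono (S i) (pred (block_index (sig (S i)))) ltac:(lia)).
    pose proof (sig_lt_mono 0 (S i) ltac:(lia)). lia.
Qed.

Lemma block_index_1 : block_index 1 = 1.
Proof. simpl. now rewrite sig_0. Qed.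

Lemma block_index_range (m x : nat) : 1 <= x <= sig m -> 1 <= block_index x <= m.
Proof.
  intro Hx. split.
  - destruct (block_index_spec x) as [_ H].
    destruct (block_index x); [rewrite sig_0 in H; lia|lia].
  - rewrite <- (block_index_sig m).
    apply (unit_steps_mono block_index block_index_step). lia.
Qed.

End BlockIndex.

Lemma firstn_S_nth {A : Type} (l : list A) (x : nat) (d : A) :
  x < length l -> firstn (S x) l = firstn x l ++ [nth x l d].
Proof.
  revert x. induction l as [|a l IH]; intros x Hx; simpl in Hx; [lia|].
  destruct x as [|x]; [reflexivity|].
  rewrite firstn_cons, (IH x) by lia. reflexivity.
Qed.

Section Refinement.
Variables (G : group) (T : list G) (g : nat -> G) (W : nat -> list G).
Hypothesis W_word : forall i, word_in G T (W i).
Hypothesis W_prod : forall i, gmul G (g i) (wprod G (W (S i))) = g (S i).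
Hypothesis W_nonnil : forall i, W i <> [].

Fixpoint blocks (j : nat) : list G :=
  match j with 0 => [] | S j' => blocks j' ++ W (S j') end.

Definition block_end (j : nat) : nat := length (blocks j).

Lemma blocks_word (j : nat) : word_in G T (blocks j).
Proof. induction j as [|j IH]; simpl; [constructor|]. now apply word_in_app. Qed.

Lemma blocks_prod (j : nat) : gmul G (g 0) (wprod G (blocks j)) = g j.
Proof.
  induction j as [|j IH]; simpl; [apply gmul1r|].
  now rewrite wprod_app, gmulA, IH.
Qed.

Lemma block_end_lt (i : nat) : block_end i < block_end (S i).
Proof.
  unfold block_end. simpl. rewrite length_app.
  pose proof (W_nonnil (S i)). destruct (W (S i)); [congruence|simpl; lia].
Qed.

Lemma blocks_prefix (i j : nat) : i <= j -> exists r, blocks j = blocks i ++ r.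
Proof.
  induction 1 as [|j _ [r Er]]; [exists []; now rewrite app_nil_r|].
  exists (r ++ W (S j)). simpl. now rewrite Er, app_assoc.
Qed.

Lemma block_end_le (L j : nat) :
  (forall i, 1 <= i <= j -> length (W i) <= L) -> block_end j <= L * j.
Proof.
  unfold block_end. induction j as [|j IH]; intro HL; simpl; [lia|].
  rewrite length_app.
  assert (IHj : length (blocks j) <= L * j) by (apply IH; intros; apply HL; lia).
  specialize (HL (S j) ltac:(lia)). nia.
Qed.

Variables (m L : nat).
Hypothesis W_length : forall i, 1 <= i <= m -> length (W i) <= L.

Definition refined_cycle (x : nat) : G := gmul G (g 0) (wprod G (firstn x (blocks m))).

Lemma refined_cycle_step (x : nat) :
  x < block_end m -> exists t, In t T /\ refined_cycle (S x) = gmul G (refined_cycle x) t.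
Proof.
  intro Hx. exists (nth x (blocks m) (g 0)). split.
  - pose proof (blocks_word m) as Hw. unfold word_in in Hw. rewrite Forall_forall in Hw.
    now apply Hw, nth_In.
  - unfold refined_cycle. rewrite (firstn_S_nth _ _ (g 0) Hx), wprod_app. simpl.
    rewrite gmul1r. apply gmulA.
Qed.

Lemma refined_cycle_is_cycle : 1 <= m -> g m = g 0 -> is_cycle G T (block_end m) refined_cycle.
Proof.
  intros Hm Hgm. split; [|split].
  - pose proof (sig_lt_mono block_end block_end_lt 0 m Hm) as Hpos.
    change (block_end 0) with 0 in Hpos. lia.
  - unfold refined_cycle, block_end. rewrite firstn_all, blocks_prod. simpl. now rewrite gmul1r.
  - intros x Hx. destruct x as [|x]; [lia|]. replace (S x - 1) with x by lia.
    apply refined_cycle_step. lia.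
Qed.

Lemma refined_cycle_near (HT : generates G T) (x : nat) :
  1 <= x <= block_end m -> word_dist G T (refined_cycle x) (g (block_index block_end x)) <= L.
Proof.
  intro Hx.
  pose proof (block_index_range block_end block_end_lt eq_refl m x Hx) as Hi.
  destruct (block_index_spec block_end block_end_lt eq_refl x) as [Hlo Hhi].
  specialize (W_length _ Hi).
  destruct (block_index block_end x) as [|k]; [lia|]. simpl pred in Hlo.
  destruct (blocks_prefix (S k) m ltac:(lia)) as [r Er].
  unfold block_end in Hlo, Hhi. simpl in Hhi. rewrite length_app in Hhi.
  set (j := x - length (blocks k)).
  assert (Hsplit : firstn x (blocks m) = blocks k ++ firstn j (W (S k))).
  { rewrite Er. simpl. rewrite <- app_assoc, firstn_app, firstn_all2 by lia.
    rewrite firstn_app. fold j. replace (j - length (W (S k))) with 0 by lia.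
    simpl. now rewrite app_nil_r. }
  assert (Hrest : word_dist G T (refined_cycle x) (g (S k)) <= length (skipn j (W (S k)))).
  { apply (word_dist_le G T HT); [now apply word_in_skipn|].
    unfold refined_cycle. rewrite Hsplit, wprod_app, (gmulA G (g 0)), blocks_prod, <- gmulA,
      <- wprod_app, firstn_skipn.
    apply W_prod. }
  rewrite length_skipn in Hrest. lia.
Qed.

End Refinement.

Record is_refinement (G : group) (T : list G) (L m : nat) (g : nat -> G)
    (M : nat) (h : nat -> G) (rho : nat -> nat) : Prop := {
  refinement_cycle : is_cycle G T M h;
  refinement_length : M <= L * m;
  refinement_first : rho 1 = 1;
  refinement_last : rho M = m;
  refinement_step : forall x, rho x <= rho (S x) <= S (rho x);
  refinement_near : forall x, 1 <= x <= M -> word_dist G T (h x) (g (rho x)) <= L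
}.

Lemma refinement_exists (G : group) (T T' : list G) (t0 : G) (L m : nat) (g : nat -> G) :
  generates G T -> generates G T' -> inv_closed G T' -> In t0 T' ->
  (forall a b, word_dist G T' a b <= L * word_dist G T a b) ->
  is_cycle G T m g ->
  exists M h rho, is_refinement G T' (L + 2) m g M h rho.
Proof.
  intros HT HT' HT'i Ht0 Hcmp Hc.
  destruct (choice (fun i w => word_in G T' w /\ gmul G (g i) (wprod G w) = g (S i) /\
                      length w = word_dist G T' (g i) (g (S i)))
                   (fun i => word_dist_geodesic G T' HT' (g i) (g (S i)))) as [V HV].
  set (W i := V (pred i) ++ [t0; ginv G t0]).
  assert (W_word : forall i, word_in G T' (W i)).
  { intro i. apply word_in_app; [apply HV|]. repeat constructor; auto. }
  assert (W_prod : forall i, gmul G (g i) (wprod G (W (S i))) = g (S i)).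
  { intro i. unfold W. simpl pred. rewrite wprod_app. simpl.
    rewrite gmul1r, gmulVr, gmul1r. apply HV. }
  assert (W_nonnil : forall i, W i <> []).
  { intros i. unfold W. now destruct (V (pred i)). }
  assert (W_length : forall i, 1 <= i <= m -> length (W i) <= L + 2).
  { intros [|i] Hi; [lia|]. unfold W. rewrite length_app. simpl pred.
    destruct (HV i) as [_ [_ ->]]. specialize (Hcmp (g i) (g (S i))).
    pose proof (cycle_dist G T HT m g i (S i) Hc ltac:(lia) ltac:(lia)). simpl. nia. }
  pose proof (block_end_lt G W W_nonnil) as Hlt.
  exists (block_end G W m), (refined_cycle G g W m), (block_index (block_end G W)). constructor.
  - apply refined_cycle_is_cycle; auto; apply Hc.
  - now apply block_end_le.
  - apply block_index_1. reflexivity.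
  - apply block_index_sig; [exact Hlt|reflexivity].
  - apply block_index_step.
  - intros x Hx. now apply refined_cycle_near.
Qed.

Lemma k_triangulation_of_refinement (G : group) (T T' : list G) (Lc L m M k : nat)
    (g h : nat -> G) (rho : nat -> nat) :
  generates G T' -> inv_closed G T' ->
  (forall a b, word_dist G T a b <= Lc * word_dist G T' a b) ->
  1 <= m -> is_refinement G T' L m g M h rho ->
  k_triangulation G T' M h k -> k_triangulation G T m g (Lc * (k + 1 + 2 * L)).
Proof.
  intros HT' HT'i Hcmp Hm [Hcyc HML H1 HM Hstep Hnear] [C' [HC' HF']].
  set (Q := fun i j => word_dist G T (g i) (g j) <= Lc * (k + 1 + 2 * L)).
  assert (HQ : forall x y, 1 <= x <= M -> 1 <= y <= M ->
                 word_dist G T' (h x) (h y) <= k + 1 -> Q (rho x) (rho y)).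
  { intros x y Hx Hy Hxy. unfold Q. eapply Nat.le_trans; [apply Hcmp|].
    apply Nat.mul_le_mono_l.
    pose proof (Hnear x Hx). pose proof (Hnear y Hy).
    pose proof (word_dist_triangle G T' HT' (g (rho x)) (h x) (g (rho y))).
    pose proof (word_dist_triangle G T' HT' (h x) (h y) (g (rho y))).
    rewrite (word_dist_sym G T' HT' HT'i (g (rho x)) (h x)) in *. lia. }
  destruct (le_lt_dec m 3) as [Hm3|Hm4].
  { exists []. split; [left; auto|constructor]. }
  pose proof (unit_steps_lipschitz rho Hstep 1 M ltac:(destruct Hcyc; lia)) as HmM.
  destruct HC' as [[HM3 _]|[_ HT]]; [lia|].
  destruct (poly_tri_map rho Hstep Q 1 M C' HT) as [C [HC HFC]].
  - intros x Hx. apply HQ; try lia.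
    pose proof (cycle_dist G T' HT' M h x (S x) Hcyc ltac:(lia) ltac:(lia)). lia.
  - pose proof (poly_tri_chord_range _ _ _ HT) as HR.
    rewrite Forall_forall in HR, HF' |- *. intros p Hp.
    specialize (HR p Hp). specialize (HF' p Hp). apply HQ; lia.
  - apply HQ; try lia.
    rewrite word_dist_sym, (proj1 (proj2 Hcyc)) by assumption.
    pose proof (cycle_dist G T' HT' M h 0 1 Hcyc ltac:(lia) ltac:(lia)). lia.
  - lia.
  - exists C. rewrite H1, HM in HC. split; [right; split; [lia|exact HC]|exact HFC].
Qed.

Theorem lemma3p1 (G : group) (S S' : list G) :
  generates G S -> inv_closed G S ->
  generates G S' -> inv_closed G S' ->
  exists K : nat, forall n : nat, 1 <= n ->
    Delta G S n <= K * Delta G S' (K * n) + K.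
Proof.
  intros HS _ HS' HS'i.
  destruct S' as [|t0 S0].
  { exists 1. intros n _. rewrite (Delta_trivial G S n HS HS'). lia. }
  destruct (word_dist_comparison G S (t0 :: S0) HS HS') as [Lc Hcmp].
  destruct (word_dist_comparison G (t0 :: S0) S HS' HS) as [L Hcmp'].
  exists (Lc * (2 * (L + 2) + 1) + (L + 2)). intros n Hn.
  set (K := Lc * (2 * (L + 2) + 1) + (L + 2)).
  set (D := Delta G (t0 :: S0) (K * n)).
  apply (Delta_le G S HS). intros m g Hmn Hc.
  destruct (refinement_exists G S (t0 :: S0) t0 L m g HS HS' HS'i (or_introl eq_refl) Hcmp' Hc)
    as [M [h [rho Hr]]].
  apply (k_triangulation_mono G S m g (Lc * (D + 1 + 2 * (L + 2)))); [unfold K; nia|].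
  apply (k_triangulation_of_refinement G S (t0 :: S0) Lc (L + 2) m M D g h rho); auto.
  - apply Hc.
  - apply (Delta_tri_bound G (t0 :: S0) HS').
    + pose proof (refinement_length _ _ _ _ _ _ _ _ Hr). unfold K. nia.
    + apply Hr.
Qed.
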